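(* Let $G$ be a graph with $m$ edges and $n^+$ positive adjacency eigenvalues. For every integer $k$ with $1\le k\le n^+$, \[6\,t(G)\ \ge\ \frac{1}{\sqrt{k}}\,\big(s_k\big)^{3/2}-\big(2m-s_k\big)^{3/2}.\]
   Context: For a simple graph $G$ on $n$ vertices and $m$ edges, let $\lambda_1\ge\cdots\ge\lambda_n$ be the eigenvalues of its adjacency matrix; $n^+$ is the number of positive eigenvalues. $t(G)$ denotes the number of triangles in $G$, and $s_k=\sum_{i=1}^k\lambda_i^2$. *)

From HB Require Import structures.
From mathcomp Require Import all_boot all_order all_algebra.
Set Implicit Arguments. Unset Strict Implicit. Unset Printing Implicit Defensive.
Import Order.TTheory GRing.Theory Num.Theory.
Local Open Scope ring_scope.

Definition simple_graph (n : nat) (e : rel 'I_n) : Prop :=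
  (forall i j, e i j = e j i) /\ (forall i, ~~ e i i).

Definition adj_mx (R : nzRingType) (n : nat) (e : rel 'I_n) : 'M[R]_n :=
  \matrix_(i, j) (e i j)%:R.

Definition num_edges (n : nat) (e : rel 'I_n) : nat :=
  #|[set p : 'I_n * 'I_n | (p.1 < p.2)%N && e p.1 p.2]|.

Definition num_triangles (n : nat) (e : rel 'I_n) : nat :=
  #|[set p : 'I_n * 'I_n * 'I_n |
      [&& (p.1.1 < p.1.2)%N, (p.1.2 < p.2)%N,
          e p.1.1 p.1.2, e p.1.2 p.2 & e p.1.1 p.2]]|.

(* lam is the spectrum of the real matrix A, listed with multiplicity in
   nonincreasing order lam_1 >= ... >= lam_n: the characteristic polynomial
   of A is prod (X - lam_i). *)
Definition sorted_spectrum (R : numFieldType) (n : nat) (A : 'M[R]_n)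
  (lam : seq R) : Prop :=
  char_poly A = \prod_(l <- lam) ('X - l%:P) /\ sorted (fun x y => y <= x) lam.

Definition n_pos (R : numFieldType) (lam : seq R) : nat := count (fun x => 0 < x) lam.

(* s_k = sum_{i=1}^k lam_i^2 (lam is 0-indexed here) *)
Definition s_k (R : numFieldType) (lam : seq R) (k : nat) : R :=
  \sum_(i < k) lam`_i ^+ 2.

Definition pow32 (R : rcfType) (x : R) : R := x * Num.sqrt x.

(* The power sums of the spectrum are traces of powers of the adjacency
   matrix A: sum lambda_i^2 = tr A^2 = 2m and sum lambda_i^3 = tr A^3 = 6t.
   Split the spectrum into its k largest eigenvalues, which are positive, and
   the rest.  On the first part the power-mean inequality gives
   sum_{i<=k} lambda_i^3 >= k^(-1/2) s_k^(3/2).  On the rest every eigenvalue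
   satisfies |lambda| <= sqrt(2m - s_k), hence
   lambda^3 >= - sqrt(2m - s_k) lambda^2, and the tail of the cube sum is at
   least -(2m - s_k)^(3/2). *)

From mathcomp Require Import all_boot all_order all_algebra.
From mathcomp Require Import sesquilinear spectral.
From mathcomp Require Import zify ring lra.
From mathcomp.real_closed Require Import complex.
Set Implicit Arguments. Unset Strict Implicit. Unset Printing Implicit Defensive.
Import Order.TTheory GRing.Theory Num.Theory.

Lemma card_set_sum (T : finType) (P : pred T) : #|[set x | P x]| = \sum_x P x.
Proof. by rewrite -sum1dep_card big_mkcond /=; apply: eq_bigr => x _; case: (P x). Qed.

Lemma sum_sym_offdiag2 n (f : 'I_n -> 'I_n -> nat) :
  (forall i j, f i j = f j i) -> (forall i, f i i = 0) ->
  \sum_i \sum_j f i j = 2 * \sum_(i < n) \sum_(j < n) ((i < j) * f i j).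
Proof.
move=> fC f0.
have split i j : f i j = (i < j) * f i j + (j < i) * f j i.
  by case: (ltngtP i j) => [_|_|/val_inj->]; rewrite ?f0 //= ?mul1n ?addn0 // fC.
under eq_bigr do under eq_bigr do rewrite split.
under eq_bigr do rewrite big_split /=.
by rewrite big_split /= [X in _ + X]exchange_big addnn -mul2n.
Qed.

Lemma sum3_swap12 n (h : 'I_n -> 'I_n -> 'I_n -> nat) :
  \sum_i \sum_j \sum_k h j i k = \sum_i \sum_j \sum_k h i j k.
Proof. exact: exchange_big. Qed.

Lemma sum3_swap23 n (h : 'I_n -> 'I_n -> 'I_n -> nat) :
  \sum_i \sum_j \sum_k h i k j = \sum_i \sum_j \sum_k h i j k.
Proof. by apply: eq_bigr => i _; exact: exchange_big. Qed.

Lemma orderings3 (a b c : nat) : a != b -> b != c -> a != c ->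
  [&& a < b & b < c] + [&& a < c & c < b] + [&& b < a & a < c]
  + [&& b < c & c < a] + [&& c < a & a < b] + [&& c < b & b < a] = 1.
Proof.
move=> ab bc ac.
by case: (ltngtP a b) => ?; case: (ltngtP b c) => ?; case: (ltngtP a c) => ? //=; lia.
Qed.

Lemma sum3D n (h1 h2 : 'I_n -> 'I_n -> 'I_n -> nat) :
  \sum_i \sum_j \sum_k (h1 i j k + h2 i j k) =
  \sum_i \sum_j \sum_k h1 i j k + \sum_i \sum_j \sum_k h2 i j k.
Proof.
rewrite -big_split; apply: eq_bigr => i _; rewrite -big_split.
by apply: eq_bigr => j _; rewrite -big_split.
Qed.

Lemma sum_sym_offdiag3 n (f : 'I_n -> 'I_n -> 'I_n -> nat) :
  (forall i j k, f i j k = f j i k) -> (forall i j k, f i j k = f i k j) ->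
  (forall i k, f i i k = 0) ->
  \sum_i \sum_j \sum_k f i j k =
  6 * \sum_(i < n) \sum_(j < n) \sum_(k < n) ([&& i < j & j < k] * f i j k).
Proof.
move=> f12 f23 f0; set g := fun i j k : 'I_n => [&& i < j & j < k] * f i j k.
have split i j k :
    f i j k = g i j k + g i k j + g j i k + g j k i + g k i j + g k j i.
  have f_ikj : f i k j = f i j k by rewrite -f23.
  have f_jik : f j i k = f i j k by rewrite -f12.
  have f_jki : f j k i = f i j k by rewrite -f23 -f12.
  have f_kij : f k i j = f i j k by rewrite -f12 -f23.
  have f_kji : f k j i = f i j k by rewrite -f12 -f23 -f12.
  rewrite /g f_ikj f_jik f_jki f_kij f_kji -!mulnDl.
  case: (eqVneq i j) => [->|ij]; first by rewrite f0 muln0.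
  case: (eqVneq j k) => [->|jk]; first by rewrite f12 f23 f0 muln0.
  case: (eqVneq i k) => [->|ik]; first by rewrite f23 f0 muln0.
  by rewrite orderings3 ?mul1n.
pose S h := \sum_(i < n) \sum_(j < n) \sum_(k < n) (h i j k : nat).
have S_ikj : S (fun i j k => g i k j) = S g := sum3_swap23 g.
have S_jik : S (fun i j k => g j i k) = S g := sum3_swap12 g.
have S_jki : S (fun i j k => g j k i) = S g.
  by rewrite -S_ikj; exact: sum3_swap12 (fun i j k => g i k j).
have S_kij : S (fun i j k => g k i j) = S g.
  by rewrite -S_jik; exact: sum3_swap23 (fun i j k => g j i k).
have S_kji : S (fun i j k => g k j i) = S g.
  by rewrite -S_jki; exact: sum3_swap23 (fun i j k => g j k i).
under eq_bigr do under eq_bigr do under eq_bigr do rewrite split.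
rewrite !sum3D; change (S g + S (fun i j k => g i k j) + S (fun i j k => g j i k)
  + S (fun i j k => g j k i) + S (fun i j k => g k i j) + S (fun i j k => g k j i)
  = 6 * S g).
by rewrite S_ikj S_jik S_jki S_kij S_kji; lia.
Qed.

Lemma num_edges_sum n (e : rel 'I_n) :
  num_edges e = \sum_(i < n) \sum_(j < n) ((i < j) * e i j).
Proof.
rewrite /num_edges card_set_sum pair_bigA /=.
by apply: eq_bigr => -[i j] _; rewrite mulnb.
Qed.

Lemma num_triangles_sum n (e : rel 'I_n) :
  num_triangles e = \sum_(i < n) \sum_(j < n) \sum_(k < n)
    ([&& i < j & j < k] * [&& e i j, e j k & e i k]).
Proof.
rewrite /num_triangles card_set_sum pair_bigA pair_bigA /=.
by apply: eq_bigr => -[[i j] k] _; rewrite mulnb /= !andbA.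
Qed.

Lemma sum_adj_edges n (e : rel 'I_n) : simple_graph e ->
  \sum_i \sum_j (e i j : nat) = 2 * num_edges e.
Proof.
move=> [sym irr]; rewrite num_edges_sum; apply: sum_sym_offdiag2 => [i j|i].
  by rewrite sym.
by rewrite (negbTE (irr i)).
Qed.

Lemma sum_adj_triangles n (e : rel 'I_n) : simple_graph e ->
  \sum_i \sum_j \sum_k ([&& e i j, e j k & e i k] : nat) = 6 * num_triangles e.
Proof.
move=> [sym irr]; rewrite num_triangles_sum.
apply: sum_sym_offdiag3 => [i j k|i j k|i k].
- by rewrite (sym j i); case: (e i j); case: (e j k); case: (e i k).
- by rewrite (sym k j); case: (e i j); case: (e j k); case: (e i k).
- by rewrite (negbTE (irr i)).
Qed.

Local Open Scope ring_scope.

Lemma char_poly_conj (F : fieldType) n (P A : 'M[F]_n) : P \in unitmx ->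
  char_poly (invmx P *m A *m P) = char_poly A.
Proof.
move=> Pu; rewrite /char_poly /char_poly_mx.
have -> : 'X%:M - map_mx polyC (invmx P *m A *m P) =
    map_mx polyC (invmx P) *m ('X%:M - map_mx polyC A) *m map_mx polyC P.
  rewrite !map_mxM mulmxBr mulmxBl; congr (_ - _).
  by rewrite mul_mx_scalar -scalemxAl -mul_scalar_mx -map_mxM mulVmx // map_mx1 mulmx1.
by rewrite !det_mulmx mulrC mulrA -det_mulmx -map_mxM mulmxV // map_mx1 det1 mul1r.
Qed.

Lemma conj_mx_exp (F : fieldType) n (P A : 'M[F]_n) p : P \in unitmx ->
  (invmx P *m A *m P) ^+ p = invmx P *m A ^+ p *m P.
Proof.
move=> Pu; elim: p => [|p IHp]; first by rewrite !expr0 mulmx1 mulVmx.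
by rewrite !exprS IHp -!mulmxE !mulmxA mulmxK.
Qed.

Lemma diag_mx_exp (R : pzRingType) n (d : 'rV[R]_n) p :
  diag_mx d ^+ p = diag_mx (\row_j d 0 j ^+ p).
Proof.
elim: p => [|p IHp].
  by rewrite expr0 -idmxE -diag_const_mx; congr diag_mx; apply/rowP => j; rewrite !mxE.
by rewrite exprS IHp -mulmxE mulmx_diag; congr diag_mx; apply/rowP => j; rewrite !mxE exprS.
Qed.

Lemma normalmx_mxtrace_exp (C : numClosedFieldType) n (A : 'M[C]_n) (s : seq C) p :
  A \is normalmx -> char_poly A = \prod_(l <- s) ('X - l%:P) ->
  \tr (A ^+ p) = \sum_(l <- s) l ^+ p.
Proof.
move=> /orthomx_spectralP; set P := spectralmx A; set d := spectral_diag A => ->.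
have Pu : P \in unitmx by apply: spectral_unit.
rewrite char_poly_conj // char_poly_trig ?diag_mx_is_trig // => charA.
have sd : perm_eq s [seq d 0 i | i <- enum 'I_n].
  by apply: prod_XsubC_eq; rewrite -charA big_map big_enum; apply: eq_bigr => i _; rewrite mxE eqxx.
rewrite (perm_big _ sd) conj_mx_exp // mxtrace_mulC mulmxA mulmxV // mul1mx diag_mx_exp mxtrace_diag.
by rewrite big_map big_enum; apply: eq_bigr => i _; rewrite mxE.
Qed.

Lemma symmetric_mxtrace_exp (R : rcfType) n (A : 'M[R]_n) (s : seq R) p :
  A^T = A -> char_poly A = \prod_(l <- s) ('X - l%:P) ->
  \tr (A ^+ p) = \sum_(l <- s) l ^+ p.
Proof.
move=> symA charA.
(* Complexify, so that the spectral theorem for normal matrices applies. *)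
have normal : map_mx (real_complex R) A \is normalmx.
  apply: symmetric_normalmx.
    rewrite is_hermitianmxE expr0 scale1r.
    by apply/eqP/matrixP => i j; rewrite !mxE -{1}symA mxE.
  by apply/mxOverP => i j; rewrite mxE; apply/Creal_ImP; rewrite -complexIm.
apply: complexI; rewrite -trace_map_mx rmorphXn rmorph_sum.
under eq_bigr do rewrite rmorphXn.
rewrite -(big_map _ xpredT (fun x => x ^+ p)); apply: normalmx_mxtrace_exp => //.
rewrite -map_char_poly charA rmorph_prod big_map; apply: eq_bigr => l _; exact: map_polyXsubC.
Qed.

Lemma mxtrace_adj_mx_sqr (R : nzRingType) n (e : rel 'I_n) : simple_graph e ->
  \tr (adj_mx R e ^+ 2) = (2 * num_edges e)%:R.
Proof.
move=> G; rewrite -sum_adj_edges // natr_sum /mxtrace; apply: eq_bigr => i _.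
rewrite natr_sum expr2 -mulmxE mxE; apply: eq_bigr => j _.
by rewrite !mxE -natrM mulnb; case: G => sym _; rewrite (sym j i) andbb.
Qed.

Lemma mxtrace_adj_mx_cube (R : nzRingType) n (e : rel 'I_n) : simple_graph e ->
  \tr (adj_mx R e ^+ 3) = (6 * num_triangles e)%:R.
Proof.
move=> G; rewrite -sum_adj_triangles // natr_sum /mxtrace; apply: eq_bigr => i _.
rewrite natr_sum exprS expr2 -!mulmxE mxE; apply: eq_bigr => j _.
rewrite natr_sum !mxE big_distrr /=; apply: eq_bigr => k _.
case: G => sym _; rewrite !mxE -!natrM !mulnb (sym k i).
by case: (e i j); case: (e j k); case: (e i k).
Qed.

Lemma power_mean_sum_cubes (R : rcfType) (I : finType) (x : I -> R) :
  (0 < #|I|)%N -> (forall i, 0 <= x i) ->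
  (Num.sqrt #|I|%:R)^-1 * pow32 (\sum_i x i ^+ 2) <= \sum_i x i ^+ 3.
Proof.
move=> I_gt0 x_ge0; set s := \sum_i x i ^+ 2; set k := #|I|.
have s_ge0 : 0 <= s by apply: sumr_ge0 => i _; exact: sqr_ge0.
have r_gt0 : 0 < Num.sqrt (k%:R : R) by rewrite sqrtr_gt0 ltr0n.
set a := Num.sqrt s / Num.sqrt k%:R.
have a_ge0 : 0 <= a by rewrite divr_ge0 ?sqrtr_ge0.
have ka2 : a ^+ 2 *+ k = s.
  rewrite /a expr_div_n !sqr_sqrtr ?ler0n // -mulr_natr.
  by field; rewrite pnatr_eq0 -lt0n.
(* Tangent-line bound at [a = sqrt (s / k)]: [(x - a)^2 (2x + a) >= 0] for [x >= 0]. *)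
have tangent i : 3%:R * a * x i ^+ 2 - a ^+ 3 <= 2%:R * x i ^+ 3.
  have : 0 <= (x i - a) ^+ 2 * (2%:R * x i + a).
    by apply: mulr_ge0; [exact: sqr_ge0 | have := x_ge0 i; lra].
  nra.
have : \sum_i (3%:R * a * x i ^+ 2 - a ^+ 3) <= \sum_i 2%:R * x i ^+ 3.
  by apply: ler_sum => i _; exact: tangent.
rewrite sumrB sumr_const -!mulr_sumr -/k -/s.
have -> : a ^+ 3 *+ k = a * s by rewrite -ka2 -mulrnAr exprS.
have -> : (Num.sqrt k%:R)^-1 * pow32 s = a * s by rewrite /pow32 /a; ring.
lra.
Qed.

Lemma sum_cubes_ge_neg_pow32 (R : rcfType) (s : seq R) :
  - pow32 (\sum_(y <- s) y ^+ 2) <= \sum_(y <- s) y ^+ 3.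
Proof.
set q := \sum_(y <- s) y ^+ 2; set r := Num.sqrt q.
have r_ge0 : 0 <= r by apply: sqrtr_ge0.
have cube_ge y : y \in s -> - r * y ^+ 2 <= y ^+ 3.
  move=> ys; have y2_le : y ^+ 2 <= q.
    rewrite /q (perm_big _ (perm_to_rem ys)) big_cons lerDl.
    by apply: sumr_ge0 => z _; exact: sqr_ge0.
  have : `|y| <= r by rewrite -sqrtr_sqr; apply: ler_wsqrtr.
  rewrite ler_norml => /andP[ry _].
  have : 0 <= y ^+ 2 * (y + r) by apply: mulr_ge0; [exact: sqr_ge0 | lra].
  nra.
have : \sum_(y <- s) - r * y ^+ 2 <= \sum_(y <- s) y ^+ 3.
  by rewrite big_seq [leRHS]big_seq; apply: ler_sum.
by rewrite -mulr_sumr /pow32 -/q -/r; lra.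
Qed.

Lemma sorted_ge_nth_gt0 (R : numDomainType) (s : seq R) i :
  sorted (fun x y => y <= x) s -> (i < count (fun x => (0 < x)%R) s)%N -> 0 < s`_i.
Proof.
elim: s i => [|x s IHs] i //= s_sorted.
have ge_trans : transitive (fun x y : R => y <= x).
  by move=> y z t zy yt; exact: le_trans yt zy.
have [x_gt0 | x_le0] := boolP (0 < x).
  case: i => [//|i]; rewrite add1n ltnS; apply: IHs; exact: path_sorted s_sorted.
rewrite add0n => /(leq_ltn_trans (leq0n i)); rewrite -has_count => /hasP[y ys y_gt0].
have /allP/(_ y ys) y_le_x := order_path_min ge_trans s_sorted.
by move: x_le0; rewrite (lt_le_trans y_gt0 y_le_x).
Qed.

Lemma sum_take_nth (U V : nmodType) (s : seq U) (F : U -> V) k : (k <= size s)%N ->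
  \sum_(x <- take k s) F x = \sum_(i < k) F s`_i.
Proof.
move=> k_le; rewrite (big_nth 0) size_takel // big_mkord.
by apply: eq_bigr => i _; rewrite nth_take.
Qed.

Theorem lemma2p2 (R : rcfType) (n : nat) (e : rel 'I_n) (lam : seq R) (k : nat) :
  simple_graph e ->
  sorted_spectrum (adj_mx R e) lam ->
  (1 <= k)%N -> (k <= n_pos lam)%N ->
  6 * (num_triangles e)%:R >=
    (Num.sqrt (k%:R : R))^-1 * pow32 (s_k lam k)
    - pow32 (2 * (num_edges e)%:R - s_k lam k).
Proof.
move=> G [charA lam_sorted] k_gt0 k_le_npos.
have k_le_size : (k <= size lam)%N := leq_trans k_le_npos (count_size _ _).
have symA : (adj_mx R e)^T = adj_mx R e.
  by apply/matrixP => i j; rewrite !mxE G.1.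
have power_sum p : \tr (adj_mx R e ^+ p) =
    \sum_(i < k) lam`_i ^+ p + \sum_(l <- drop k lam) l ^+ p.
  rewrite (symmetric_mxtrace_exp p symA charA) -{1}(cat_take_drop k lam).
  by rewrite big_cat sum_take_nth.
have := power_sum 2; rewrite mxtrace_adj_mx_sqr // natrM => edges.
have := power_sum 3; rewrite mxtrace_adj_mx_cube // natrM => triangles.
have head : (Num.sqrt (k%:R : R))^-1 * pow32 (s_k lam k) <= \sum_(i < k) lam`_i ^+ 3.
  rewrite -[k in k%:R]card_ord; apply: power_mean_sum_cubes => [|i].
    by rewrite card_ord.
  by apply/ltW/sorted_ge_nth_gt0; last exact: leq_trans (ltn_ord i) k_le_npos.
have tail := sum_cubes_ge_neg_pow32 (drop k lam).
have -> : 2 * (num_edges e)%:R - s_k lam k = \sum_(l <- drop k lam) l ^+ 2.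
  by rewrite edges /s_k addrC addKr.
by rewrite triangles; lra.
Qed.
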